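(* Let $A$ be a $3\times 3$ skew-symmetric integer matrix. Then $A$ passes the algorithm described in the context if and only if $A$ is mutation-cyclic.
   Context: Notation: $S(p,q,r)=\begin{pmatrix}0&-p&-r\\ p&0&-q\\ r&q&0\end{pmatrix}$ for integers $p,q,r$. Matrix mutation: $\mu_k(B)=(b'_{ij})$ with $b'_{ij}=-b_{ij}$ if $i=k$ or $j=k$, and $b'_{ij}=b_{ij}+\operatorname{sgn}(b_{ik})\max(b_{ik}b_{kj},0)$ otherwise. A column is sign-coherent if all its nonzero entries have the same sign. A $3\times3$ skew-symmetric matrix is acyclic if its quiver ($b_{ij}$ arrows $i\to j$ when $b_{ij}>0$) has no oriented cycle (equivalently, it has a sign-coherent column), and cyclic otherwise; it is mutation-cyclic if every matrix in its mutation class is cyclic. $B,C$ are essentially equivalent if for some permutation $\sigma$ of $\{1,2,3\}$, $C_{ij}=B_{\sigma(i)\sigma(j)}$ for all $i,j$ or $C_{ij}=-B_{\sigma(i)\sigma(j)}$ for all $i,j$. The standard form of $B$ is the first matrix in the list $S(-a,-b,c),S(-a,b,c),S(a,-b,c),S(a,b,c)$ ($a\ge b\ge c\ge0$) essentially equivalent to $B$. Algorithm: replace the input by its standard form, written $S(-a,-b,c)$ with $|a|\ge|b|\ge|c|\ge0$, and set $A_1$ equal to it. Step 1: if $a\ge b\ge c\ge 2$ and $bc-a\ge b$, the input passes; otherwise, if some column is sign-coherent or $c\le 2$, it fails. Step 2 (for the current $A_i$): if some matrix essentially equivalent to $\mu_3(A_i)$ has the form $S(-d,-e,f)$ with $d\ge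 e\ge f\ge 2$, let $A_{i+1}$ be such a matrix; otherwise the input fails. Then: if $f\ge 3$ and $ef-d\ge e$, it passes; if $f=2$ it passes if $d=e$ and fails if $d>e$; otherwise increase $i$ by one and repeat Step 2. *)

From mathcomp Require Import all_boot all_order all_fingroup all_algebra.
Set Implicit Arguments. Unset Strict Implicit. Unset Printing Implicit Defensive.
Import Order.TTheory GRing.Theory Num.Theory.
Local Open Scope ring_scope.

Definition S (p q r : int) : 'M[int]_3 :=
  \matrix_(i < 3, j < 3)
    match nat_of_ord i, nat_of_ord j with
    | 0%N, 1%N => - p | 0%N, 2%N => - r
    | 1%N, 0%N => p   | 1%N, 2%N => - q
    | 2%N, 0%N => r   | 2%N, 1%N => q
    | _, _ => 0
    end.

Definition skew_symmetric (B : 'M[int]_3) : Prop := B^T = - B.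

Definition mu (k : 'I_3) (B : 'M[int]_3) : 'M[int]_3 :=
  \matrix_(i < 3, j < 3)
    if (i == k) || (j == k) then - B i j
    else B i j + Num.sg (B i k) * Num.max (B i k * B k j) 0.

Definition mutseq (ks : seq 'I_3) (B : 'M[int]_3) : 'M[int]_3 :=
  foldl (fun M k => mu k M) B ks.

Definition sign_coherent_col (B : 'M[int]_3) (j : 'I_3) : Prop :=
  (forall i, 0 <= B i j) \/ (forall i, B i j <= 0).

(* quiver: b_ij arrows i -> j when b_ij > 0 *)
Definition arrow (B : 'M[int]_3) : rel 'I_3 := fun i j => 0 < B i j.

Definition cyclic (B : 'M[int]_3) : Prop :=
  exists i j, arrow B i j /\ connect (arrow B) j i.

Definition acyclic (B : 'M[int]_3) : Prop := ~ cyclic B.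

Definition mutation_cyclic (B : 'M[int]_3) : Prop :=
  forall ks : seq 'I_3, cyclic (mutseq ks B).

Definition ess_equiv (B C : 'M[int]_3) : Prop :=
  exists s : {perm 'I_3},
    (forall i j, C i j = B (s i) (s j)) \/ (forall i j, C i j = - B (s i) (s j)).

Definition std_list (a b c : int) : seq 'M[int]_3 :=
  [:: S (- a) (- b) c; S (- a) b c; S a (- b) c; S a b c].

Definition std_form (B C : 'M[int]_3) : Prop :=
  exists a b c : int, [/\ a >= b, b >= c & c >= 0] /\
    exists k : nat, (k < 4)%N /\ C = nth 0 (std_list a b c) k /\ ess_equiv B C /\
      (forall j : nat, (j < k)%N -> ~ ess_equiv B (nth 0 (std_list a b c) j)).

(* entries a, b, c when C is written as S(-a,-b,c) *)
Definition ent_a (C : 'M[int]_3) : int := - C 1 0.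
Definition ent_b (C : 'M[int]_3) : int := - C 2 1.
Definition ent_c (C : 'M[int]_3) : int := C 2 0.

(* Step 2, iterated from the current A_i; "passes" = some run terminates with pass. *)
Inductive step2_passes : 'M[int]_3 -> Prop :=
| step2_pass_f3 (A : 'M[int]_3) (d e f : int) :
    [/\ d >= e, e >= f & f >= 2] -> ess_equiv (mu 2 A) (S (- d) (- e) f) ->
    f >= 3 -> e * f - d >= e -> step2_passes A
| step2_pass_f2 (A : 'M[int]_3) (d e f : int) :
    [/\ d >= e, e >= f & f >= 2] -> ess_equiv (mu 2 A) (S (- d) (- e) f) ->
    f = 2 -> d = e -> step2_passes A
| step2_repeat (A : 'M[int]_3) (d e f : int) :
    [/\ d >= e, e >= f & f >= 2] -> ess_equiv (mu 2 A) (S (- d) (- e) f) ->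
    f >= 3 -> e * f - d < e -> step2_passes (S (- d) (- e) f) -> step2_passes A.

(* Step 1 on A_1 (already in standard form), then Step 2 *)
Definition passes_from_std (A1 : 'M[int]_3) : Prop :=
  let a := ent_a A1 in let b := ent_b A1 in let c := ent_c A1 in
  let step1_pass := [/\ a >= b, b >= c, c >= 2 & b * c - a >= b] in
  step1_pass \/
  [/\ ~ step1_pass, ~ (exists j, sign_coherent_col A1 j), ~ (c <= 2)
    & step2_passes A1].

Definition alg_passes (A : 'M[int]_3) : Prop :=
  exists A1, std_form A A1 /\ passes_from_std A1.

From mathcomp Require Import all_boot all_order all_fingroup all_algebra zify ring.
Set Implicit Arguments. Unset Strict Implicit. Unset Printing Implicit Defensive.
Import Order.TTheory GRing.Theory Num.Theory.
Local Open Scope ring_scope.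

(* A skew-symmetric 3x3 matrix is determined by the triple (x, y, z) = (b01, b12, b20), and
   its quiver is cyclic exactly when x, y, z are all positive or all negative.  Mutation
   commutes with relabelling and negation, so mutation-cyclicity is an invariant of the
   essential class, and we may assume the triple positive and sorted.  Mutation at a vertex
   then replaces the opposite entry x by yz - x (up to a global sign): this Vieta flip keeps
   the Markov quantity x^2 + y^2 + z^2 - xyz, and the result is cyclic iff yz > x.  Triples
   with all entries >= 2 and Markov quantity <= 4 are closed under flips, hence
   mutation-cyclic.  Conversely, flipping the largest entry a of a mutation-cyclic triple
   either lands in the window b <= a <= bc - b, where the Markov quantity is at most 4 by
   convexity, or strictly decreases the sum.  The algorithm runs this same descent and
   stops with "pass" exactly in that window. *)

Lemma homo_connect (T T' : finType) (e : rel T) (e' : rel T') (f : T -> T') :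
  {homo f : x y / e x y >-> e' x y} -> forall x y, connect e x y -> connect e' (f x) (f y).
Proof.
move=> hom x y /connectP[p ep ->]; apply/connectP.
by exists (map f p); [exact: homo_path hom ep | rewrite last_map].
Qed.

Lemma connect_rank_leq (T : finType) (e : rel T) (h : T -> nat) :
  {homo h : x y / e x y >-> (x < y)%N} -> forall x y, connect e x y -> (h x <= h y)%N.
Proof.
move=> hom x y /connectP[p + ->]; elim: p x => //= z p IH x /andP[exz ep].
exact: leq_trans (ltnW (hom _ _ exz)) (IH _ ep).
Qed.

Lemma acyclic_of_rank B (h : 'I_3 -> nat) :
  {homo h : i j / arrow B i j >-> (i < j)%N} -> ~ cyclic B.
Proof.
move=> hom [i [j [/hom ij /(connect_rank_leq hom) ji]]].
by have := leq_trans ij ji; rewrite ltnn.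
Qed.

Definition relabel (s : {perm 'I_3}) (B : 'M[int]_3) : 'M[int]_3 :=
  \matrix_(i, j) B (s i) (s j).

Lemma relabel1 B : relabel 1%g B = B.
Proof. by apply/matrixP => i j; rewrite !mxE !perm1. Qed.

Lemma relabelM s t B : relabel t (relabel s B) = relabel (t * s)%g B.
Proof. by apply/matrixP => i j; rewrite !mxE !permM. Qed.

Lemma relabelN s B : relabel s (- B) = - relabel s B.
Proof. by apply/matrixP => i j; rewrite !mxE. Qed.

Lemma cyclic_relabel s B : cyclic B -> cyclic (relabel s B).
Proof.
case=> i [j [ij ji]]; exists (s^-1 i)%g, (s^-1 j)%g; rewrite /arrow mxE !permKV; split=> //.
by apply: homo_connect ji => a b; rewrite /arrow mxE !permKV.
Qed.

Lemma cyclic_tr B : cyclic B -> cyclic B^T.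
Proof.
case=> i [j [ij ji]]; exists j, i; rewrite /arrow mxE; split=> //.
have arrowT : arrow B^T =2 [rel a b | arrow B b a] by move=> a b; rewrite /arrow mxE.
by rewrite (eq_connect arrowT) connect_rev.
Qed.

Lemma cyclic_opp B : skew_symmetric B -> cyclic B -> cyclic (- B).
Proof. by move=> skB /cyclic_tr; rewrite skB. Qed.

Lemma skew_relabel s B : skew_symmetric B -> skew_symmetric (relabel s B).
Proof.
move=> skB; apply/matrixP => i j.
by have := congr1 (fun M : 'M_3 => M (s i) (s j)) skB; rewrite !mxE.
Qed.

Lemma mu_relabel k s B : mu k (relabel s B) = relabel s (mu (s k) B).
Proof. by apply/matrixP => i j; rewrite !mxE !(inj_eq perm_inj). Qed.

Lemma mu_opp k B : mu k (- B) = - mu k B.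
Proof.
apply/matrixP => i j; rewrite !mxE; case: ifP => // _.
by rewrite mulrNN sgrN mulNr opprD.
Qed.

Lemma sg_max_mulC (a b : int) :
  Num.sg a * Num.max (a * b) 0 = Num.sg b * Num.max (b * a) 0.
Proof. by rewrite mulrC; case: (ltrgt0P a) => a0; case: (ltrgt0P b) => b0; nia. Qed.

Lemma mu_tr k B : mu k B^T = (mu k B)^T.
Proof.
by apply/matrixP => i j; rewrite !mxE orbC; case: ifP => // _; rewrite sg_max_mulC.
Qed.

Lemma muK k B : mu k (mu k B) = B.
Proof.
apply/matrixP => i j; rewrite [LHS]mxE; case: ifP => ijk; rewrite !mxE ?ijk ?opprK //.
by rewrite !eqxx orbT /=; nia.
Qed.

Lemma skew_mu k B : skew_symmetric B -> skew_symmetric (mu k B).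
Proof. by move=> skB; rewrite /skew_symmetric -mu_tr skB mu_opp. Qed.

Lemma mutseq_relabel ks s B :
  mutseq ks (relabel s B) = relabel s (mutseq (map s ks) B).
Proof. by elim: ks B => //= k ks IH B; rewrite /mutseq /= mu_relabel -IH. Qed.

Lemma mutseq_opp ks B : mutseq ks (- B) = - mutseq ks B.
Proof. by elim: ks B => //= k ks IH B; rewrite /mutseq /= mu_opp -IH. Qed.

Lemma skew_mutseq ks B : skew_symmetric B -> skew_symmetric (mutseq ks B).
Proof. by elim: ks B => //= k ks IH B skB; apply: IH; exact: skew_mu. Qed.

Lemma ess_equivP B C :
  ess_equiv B C <-> exists s, C = relabel s B \/ C = - relabel s B.
Proof.
split=> -[s eqC]; exists s.
  by case: eqC => eqC; [left | right]; apply/matrixP => i j; rewrite !mxE eqC.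
by case: eqC => ->; [left | right] => i j; rewrite !mxE.
Qed.

Lemma ess_equiv_refl B : ess_equiv B B.
Proof. by apply/ess_equivP; exists 1%g; left; rewrite relabel1. Qed.

Lemma ess_equiv_opp B : ess_equiv B (- B).
Proof. by apply/ess_equivP; exists 1%g; right; rewrite relabel1. Qed.

Lemma ess_equiv_sym B C : ess_equiv B C -> ess_equiv C B.
Proof.
move=> /ess_equivP[s eqC]; apply/ess_equivP; exists s^-1%g.
have relabelK : relabel s^-1 (relabel s B) = B by rewrite relabelM mulVg relabel1.
by case: eqC => ->; [left | right]; rewrite ?relabelN relabelK ?opprK.
Qed.

Lemma ess_equiv_trans B C D : ess_equiv B C -> ess_equiv C D -> ess_equiv B D.
Proof.
move=> /ess_equivP[s eqC] /ess_equivP[t eqD]; apply/ess_equivP; exists (t * s)%g.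
by case: eqC eqD => -> [] ->; rewrite ?relabelN relabelM ?opprK; [left | right | right | left].
Qed.

Lemma cyclic_ess B C : skew_symmetric B -> ess_equiv B C -> cyclic B -> cyclic C.
Proof.
move=> skB /ess_equivP[s [] -> /(cyclic_relabel s)] //.
by apply: cyclic_opp; exact: skew_relabel.
Qed.

Lemma mutation_cyclic_mu k B : mutation_cyclic B -> mutation_cyclic (mu k B).
Proof. by move=> mcB ks; exact: (mcB (k :: ks)). Qed.

Lemma mutation_cyclic_ess B C :
  skew_symmetric B -> ess_equiv B C -> mutation_cyclic B -> mutation_cyclic C.
Proof.
move=> skB /ess_equivP[s eqC] mcB ks.
apply: (cyclic_ess (skew_mutseq (map s ks) skB) _ (mcB _)); apply/ess_equivP; exists s.
by case: eqC => ->; rewrite ?mutseq_opp mutseq_relabel; [left | right].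
Qed.

Lemma ord3_ind (P : 'I_3 -> Prop) : P 0 -> P 1 -> P 2 -> forall i, P i.
Proof.
move=> P0 P1 P2 [[|[|[|//]]] lt].
- by rewrite (_ : Ordinal lt = 0) //; apply: val_inj.
- by rewrite (_ : Ordinal lt = 1) //; apply: val_inj.
- by rewrite (_ : Ordinal lt = 2) //; apply: val_inj.
Qed.

(* [skew3 x y z] has [b01 = x], [b12 = y] and [b20 = z]. *)
Definition skew3 (x y z : int) : 'M[int]_3 := S (- x) (- y) z.

Lemma skew_S p q r : skew_symmetric (S p q r).
Proof. by apply/matrixP; elim/ord3_ind; elim/ord3_ind; rewrite !mxE /= ?opprK ?oppr0. Qed.

Lemma skew3E B : skew_symmetric B -> B = skew3 (B 0 1) (B 1 2) (B 2 0).
Proof.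
move=> skB; have Bji i j : B j i = - B i j.
  by have := congr1 (fun M : 'M_3 => M i j) skB; rewrite !mxE.
apply/matrixP; elim/ord3_ind; elim/ord3_ind; rewrite !mxE /= ?opprK //.
all: by rewrite Bji ?opprK //; have := Bji 0 0; have := Bji 1 1; have := Bji 2 2; lia.
Qed.

Lemma skew3N x y z : skew3 (- x) (- y) (- z) = - skew3 x y z.
Proof. by apply/matrixP; elim/ord3_ind; elim/ord3_ind; rewrite !mxE /= ?opprK ?oppr0. Qed.

Definition swap01 : {perm 'I_3} := tperm 0 1.
Definition rot3 : {perm 'I_3} := mulg (tperm 1 2) swap01.

Lemma ess_equiv_rot x y z : ess_equiv (skew3 x y z) (skew3 y z x).
Proof.
apply/ess_equivP; exists rot3; left; apply/matrixP => i j; rewrite !mxE !permM !permE.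
by case: i j => [[|[|[|?]]] ?] [[|[|[|?]]] ?] //=; rewrite ?opprK.
Qed.

Lemma ess_equiv_swap x y z : ess_equiv (skew3 x y z) (skew3 x z y).
Proof.
apply/ess_equivP; exists swap01; right; apply/matrixP => i j; rewrite !mxE !permE.
by case: i j => [[|[|[|?]]] ?] [[|[|[|?]]] ?] //=; rewrite ?opprK ?oppr0.
Qed.

Lemma mu_skew3 x y z : 0 < x -> 0 < y -> 0 < z ->
  [/\ mu 0 (skew3 x y z) = - skew3 x (z * x - y) z,
      mu 1 (skew3 x y z) = - skew3 x y (x * y - z)
    & mu 2 (skew3 x y z) = - skew3 (y * z - x) y z].
Proof.
move=> x0 y0 z0; split; apply/matrixP => i j; rewrite !mxE.
all: by case: i j => [[|[|[|?]]] ?] [[|[|[|?]]] ?] /=; nia.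
Qed.

Lemma cyclic_skew3_pos x y z : 0 < x -> 0 < y -> 0 < z -> cyclic (skew3 x y z).
Proof.
move=> x0 y0 z0; exists 0, 1; split; first by rewrite /arrow !mxE opprK.
by apply: (@connect_trans _ _ 2); apply: connect1; rewrite /arrow !mxE ?opprK.
Qed.

Lemma skew3_source_acyclic x y z : x <= 0 -> 0 <= y -> ~ cyclic (skew3 x y z).
Proof.
move=> x0 y0; have [z0|z0] := ltP 0 z.
- apply: (acyclic_of_rank (h := fun i => nth 0 [:: 2; 0; 1] i)%N) => i j.
  by rewrite /arrow !mxE; case: i j => [[|[|[|?]]] ?] [[|[|[|?]]] ?] /=; lia.
- apply: (acyclic_of_rank (h := fun i => nth 0 [:: 1; 0; 2] i)%N) => i j.
  by rewrite /arrow !mxE; case: i j => [[|[|[|?]]] ?] [[|[|[|?]]] ?] /=; lia.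
Qed.

Lemma cyclic_skew3 x y z :
  cyclic (skew3 x y z) -> (0 < x /\ 0 < y /\ 0 < z) \/ (x < 0 /\ y < 0 /\ z < 0).
Proof.
have cyc_mul u v w : cyclic (skew3 u v w) -> 0 < u * v.
  move=> cyc; rewrite ltNge; apply/negP => uv.
  have [[u0 v0]|[u0 v0]] : (u <= 0 /\ 0 <= v) \/ (0 <= u /\ v <= 0).
    by case: (lerP u 0) => u0; [case: (lerP 0 v) => v0 |]; [left | right | right]; nia.
    exact: skew3_source_acyclic u0 v0 cyc.
  apply: (@skew3_source_acyclic (- u) (- v) (- w)); rewrite ?oppr_le0 ?oppr_ge0 // skew3N.
  by apply: cyclic_opp; [exact: skew_S | ].
move=> cyc; have xy := cyc_mul _ _ _ cyc.
have /cyc_mul yz := cyclic_ess (skew_S _ _ _) (ess_equiv_rot x y z) cyc.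
have [y0|y0|y0] := ltrgt0P y; [left | right | by move: xy; rewrite y0 mulr0 ltxx].
all: by do !split; nia.
Qed.

Lemma sort3_ind (disp : Order.disp_t) (T : orderType disp) (P : T -> T -> T -> Prop) :
  (forall x y z, P x y z -> P y z x) -> (forall x y z, P x y z -> P x z y) ->
  (forall x y z, (z <= y <= x)%O -> P x y z) -> forall x y z, P x y z.
Proof.
move=> Prot Pswap Psorted.
have Pmax x y z : (y <= x)%O -> (z <= x)%O -> P x y z.
  move=> yx zx; case: (leP z y) => [zy | /ltW yz]; first by apply: Psorted; rewrite zy yx.
  by apply: Pswap; apply: Psorted; rewrite yz zx.
move=> x y z; case: (leP y x) => [yx | /ltW xy].
  case: (leP z x) => [zx | /ltW xz]; first exact: Pmax.
  by apply: (Prot); apply: (Pmax) => //; exact: le_trans xz.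
case: (leP z y) => [zy | /ltW yz]; first by apply: (Prot); apply: (Prot); apply: (Pmax).
by apply: (Prot); apply: (Pmax) => //; exact: le_trans yz.
Qed.

Definition markov (x y z : int) : int := x ^+ 2 + y ^+ 2 + z ^+ 2 - x * y * z.

Definition markov_bounded (x y z : int) : Prop :=
  [/\ 2 <= x, 2 <= y, 2 <= z & markov x y z <= 4].

Lemma markov_bounded_rot x y z : markov_bounded x y z -> markov_bounded y z x.
Proof. by case=> x2 y2 z2; rewrite /markov_bounded /markov; split=> //; lia. Qed.

Lemma markov_bounded_swap x y z : markov_bounded x y z -> markov_bounded x z y.
Proof. by case=> x2 y2 z2; rewrite /markov_bounded /markov; split=> //; lia. Qed.

Lemma markov_flip x y z : markov (y * z - x) y z = markov x y z.
Proof. by rewrite /markov; ring. Qed.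

Lemma markov_bounded_flip x y z :
  markov_bounded x y z -> markov_bounded (y * z - x) y z.
Proof.
case=> x2 y2 z2 m4; split; rewrite ?markov_flip //.
have flipE : x * (y * z - x) = y ^+ 2 + z ^+ 2 - markov x y z by rewrite /markov; ring.
have : 0 <= (y - z) ^+ 2 by exact: sqr_ge0.
nia.
Qed.

Lemma markov_bounded_window a b c :
  2 <= c -> c <= b -> b <= a -> a <= b * c - b -> markov_bounded a b c.
Proof.
move=> c2 cb ba abc; split; try lia.
(* [markov _ b c] is a convex quadratic, symmetric about [bc/2] and at most 4 at [b]. *)
have -> : markov a b c = (a - b) * (a + b - b * c) + (b ^+ 2 - c ^+ 2) * (2 - c)
                         + 4 - (c - 2) ^+ 2 * (c + 1) by rewrite /markov; ring.
have : (a - b) * (a + b - b * c) <= 0 by apply: mulr_ge0_le0; lia.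
have : (b ^+ 2 - c ^+ 2) * (2 - c) <= 0 by apply: mulr_ge0_le0; nia.
have : 0 <= (c - 2) ^+ 2 * (c + 1) by rewrite mulr_ge0 ?sqr_ge0 //; lia.
lia.
Qed.

Lemma markov_bounded_gt0 x y z : markov_bounded x y z -> [/\ 0 < x, 0 < y & 0 < z].
Proof. by case=> x2 y2 z2 _; split; lia. Qed.

Lemma mu_skew3_bounded k x y z : markov_bounded x y z ->
  exists x' y' z', markov_bounded x' y' z' /\ mu k (skew3 x y z) = - skew3 x' y' z'.
Proof.
move=> bxyz; have [x0 y0 z0] := markov_bounded_gt0 bxyz.
have [mu0 mu1 mu2] := mu_skew3 x0 y0 z0.
elim/ord3_ind: k.
- exists x, (z * x - y), z; rewrite mu0; split=> //.
  by do 2!apply: markov_bounded_rot; exact/markov_bounded_flip/markov_bounded_rot.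
- exists x, y, (x * y - z); rewrite mu1; split=> //.
  by apply/markov_bounded_rot/markov_bounded_flip; do 2!apply: markov_bounded_rot.
- by exists (y * z - x), y, z; rewrite mu2; split=> //; exact: markov_bounded_flip.
Qed.

Lemma mutation_cyclic_of_markov_bounded x y z :
  markov_bounded x y z -> mutation_cyclic (skew3 x y z).
Proof.
pose markov_class B :=
  exists x y z, markov_bounded x y z /\ (B = skew3 x y z \/ B = - skew3 x y z).
suff cyc_class ks B : markov_class B -> cyclic (mutseq ks B).
  by move=> bxyz ks; apply: cyc_class; exists x, y, z; split; [|left].
elim: ks B => [|k ks IH] B [u [v [w [buvw eqB]]]].
  have [u0 v0 w0] := markov_bounded_gt0 buvw.
  have cyc := cyclic_skew3_pos u0 v0 w0.
  by case: eqB => ->; last exact: cyclic_opp (skew_S _ _ _) cyc.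
apply: IH; have [u' [v' [w' [b' muE]]]] := mu_skew3_bounded k buvw.
by exists u', v', w'; split=> //; case: eqB => ->; rewrite ?mu_opp muE ?opprK; [right | left].
Qed.

Lemma markov_bounded_of_mutation_cyclic x y z : 0 < x -> 0 < y -> 0 < z ->
  mutation_cyclic (skew3 x y z) -> markov_bounded x y z.
Proof.
have [n xyz_n] : exists n : nat, x + y + z <= n%:Z by exists (absz (x + y + z)); lia.
elim: n x y z xyz_n => [|n IH]; first by move=> x y z; lia.
apply: sort3_ind => [x y z Pxyz | x y z Pxyz | a b c /andP[cb ba] abc_n a0 b0 c0 mc].
- move=> yzx_n y0 z0 x0 mc; apply: markov_bounded_rot; apply: Pxyz => //; first lia.
  apply: mutation_cyclic_ess mc; first exact: skew_S.
  exact: ess_equiv_trans (ess_equiv_rot _ _ _) (ess_equiv_rot _ _ _).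
- move=> xzy_n x0 z0 y0 mc; apply: markov_bounded_swap; apply: Pxyz => //; first lia.
  by apply: mutation_cyclic_ess mc; [exact: skew_S | exact: ess_equiv_swap].
have [_ _ mu2] := mu_skew3 a0 b0 c0.
have mc_flip : mutation_cyclic (skew3 (b * c - a) b c).
  apply: mutation_cyclic_ess (mutation_cyclic_mu 2 mc); first exact: skew_mu (skew_S _ _ _).
  by rewrite mu2 -{2}[skew3 _ _ _]opprK; exact: ess_equiv_opp.
(* cyclicity after the flip forces [bc > a]; then either [a] is in the window or the
   flipped triple has a smaller sum *)
have [[flip0 _]|[_ [bneg _]]] := cyclic_skew3 (mc_flip [::]); last by lia.
have c2 : 2 <= c by nia.
have [a_half|half_a] := lerP (a *+ 2) (b * c).
  by apply: markov_bounded_window => //; lia.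
have /markov_bounded_flip : markov_bounded (b * c - a) b c by apply: IH => //; lia.
by rewrite opprB addrC subrK.
Qed.

Lemma ess_equiv_skew3N x y z : ess_equiv (skew3 x y z) (skew3 (- x) (- y) (- z)).
Proof. by rewrite skew3N; exact: ess_equiv_opp. Qed.

Lemma alg_passes_ess A B : ess_equiv A B -> alg_passes A -> alg_passes B.
Proof.
move=> AB [A1 [[a [b [c [abc [k [k4 [A1E [AA1 minimal]]]]]]]] pass]].
exists A1; split=> //; exists a, b, c; split=> //; exists k; do !split=> //.
  exact: ess_equiv_trans (ess_equiv_sym AB) AA1.
by move=> j jk BA; apply: (minimal j jk); exact: ess_equiv_trans AB BA.
Qed.

Lemma mutation_cyclic_of_step2_passes A : step2_passes A -> mutation_cyclic A.
Proof.
have back A' d e f : ess_equiv (mu 2 A') (skew3 d e f) ->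
    mutation_cyclic (skew3 d e f) -> mutation_cyclic A'.
  move=> equiv mc; rewrite -(muK 2 A'); apply: mutation_cyclic_mu.
  exact: mutation_cyclic_ess (skew_S _ _ _) (ess_equiv_sym equiv) mc.
elim=> {A} A d e f [de ef f2] equiv.
- move=> f3 efd; apply: back equiv _.
  by apply/mutation_cyclic_of_markov_bounded/markov_bounded_window; lia.
- move=> f2' de'; apply: back equiv _.
  by apply/mutation_cyclic_of_markov_bounded/markov_bounded_window; lia.
- by move=> _ _ _ mc; exact: back equiv mc.
Qed.

Lemma mutation_cyclic_of_passes_from_std x y z :
  passes_from_std (skew3 x y z) -> mutation_cyclic (skew3 x y z).
Proof.
rewrite /passes_from_std /ent_a /ent_b /ent_c !mxE /= !opprK.
case=> [[yx zy z2 window] | [_ _ _ /mutation_cyclic_of_step2_passes //]].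
by apply/mutation_cyclic_of_markov_bounded/markov_bounded_window; lia.
Qed.

Lemma step2_passes_of_markov_bounded (a b c : int) :
  c <= b <= a -> markov_bounded a b c -> b * c - a < b -> step2_passes (skew3 a b c).
Proof.
have [n a_n] : exists n : nat, a <= n%:Z by exists (absz a); lia.
elim: n a b c a_n => [|n IH] a b c a_n /andP[cb ba] babc flip_lt; first by case: babc; lia.
have [a0 b0 c0] := markov_bounded_gt0 babc.
have [_ _ mu2] := mu_skew3 a0 b0 c0.
have bflip := markov_bounded_flip babc; have [flip2 _ c2 _] := bflip.
have step d e f : ess_equiv (skew3 (b * c - a) b c) (skew3 d e f) -> f <= e <= d ->
    markov_bounded d e f -> d <= n%:Z -> step2_passes (skew3 a b c).
  move=> equiv fed bdef d_n; have /andP[fe ed] := fed; have [_ _ f2 mdef] := bdef.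
  have equiv' : ess_equiv (mu 2 (skew3 a b c)) (S (- d) (- e) f).
    by rewrite mu2; exact: ess_equiv_trans (ess_equiv_sym (ess_equiv_opp _)) equiv.
  have sorted : [/\ d >= e, e >= f & f >= 2] by [].
  have [f3|f_lt3] := lerP 3 f.
    have [efd|efd] := lerP e (e * f - d); first exact: step2_pass_f3 sorted equiv' f3 efd.
    by apply: step2_repeat sorted equiv' f3 (efd) _; apply: IH.
  have f2E : f = 2 by lia.
  have sqr_de : (d - e) ^+ 2 <= 0 by move: mdef; rewrite /markov f2E; lia.
  by apply: step2_pass_f2 sorted equiv' f2E _; nia.
have ba' : b < a by nia.
have [cu|uc] := lerP c (b * c - a).
  apply: (step b (b * c - a) c); rewrite ?cu ?(ltW flip_lt) //; last lia.
    exact: ess_equiv_trans (ess_equiv_rot _ _ _) (ess_equiv_swap _ _ _).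
  by apply/markov_bounded_swap/markov_bounded_rot.
apply: (step b c (b * c - a)); rewrite ?cb ?(ltW uc) //; last lia.
  exact: ess_equiv_rot.
exact: markov_bounded_rot.
Qed.

Lemma alg_passes_of_markov_bounded x y z :
  markov_bounded x y z -> alg_passes (skew3 x y z).
Proof.
move: x y z; apply: sort3_ind => [x y z Pxyz byzx | x y z Pxyz bxzy | a b c cba babc].
- apply: alg_passes_ess (ess_equiv_rot x y z) _.
  by apply: Pxyz; do 2!apply: markov_bounded_rot.
- apply: alg_passes_ess (ess_equiv_swap x y z) _.
  by apply: Pxyz; apply: markov_bounded_swap.
have [a2 b2 c2 m4] := babc; have /andP[cb ba] := cba.
exists (skew3 a b c); split.
  exists a, b, c; split; first by split; lia.
  exists 0%N; split=> //; split=> //; split; first exact: ess_equiv_refl.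
  by move=> j; rewrite ltn0.
rewrite /passes_from_std /ent_a /ent_b /ent_c !mxE /= !opprK.
have [window|flip_lt] := lerP b (b * c - a); first by left; split.
right; split.
- by case; lia.
- case=> j; elim/ord3_ind: j => -[] col;
    by have := col 0; have := col 1; have := col 2; rewrite !mxE /= ?opprK; lia.
- move=> c_le2; have c2E : c = 2 by lia.
  by move: m4; rewrite /markov c2E; nia.
- exact: step2_passes_of_markov_bounded.
Qed.

Lemma mutation_cyclic_of_alg_passes A : alg_passes A -> mutation_cyclic A.
Proof.
case=> A1 [[a [b [c [_ [k [k4 [A1E [AA1 _]]]]]]]] pass].
have skA1 : skew_symmetric A1.
  by rewrite A1E; case: k k4 {A1E} => [|[|[|[|]]]] // _; exact: skew_S.
apply: mutation_cyclic_ess (skA1) (ess_equiv_sym AA1) _.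
by move: pass; rewrite (skew3E skA1); exact: mutation_cyclic_of_passes_from_std.
Qed.

Lemma alg_passes_of_mutation_cyclic x y z :
  mutation_cyclic (skew3 x y z) -> alg_passes (skew3 x y z).
Proof.
move=> mc; have [[x0 [y0 z0]]|[x0 [y0 z0]]] := cyclic_skew3 (mc [::]).
  by apply: alg_passes_of_markov_bounded; apply: markov_bounded_of_mutation_cyclic.
have equivN := ess_equiv_skew3N x y z.
apply: alg_passes_ess (ess_equiv_sym equivN) _; apply: alg_passes_of_markov_bounded.
apply: markov_bounded_of_mutation_cyclic; rewrite ?oppr_gt0 //.
exact: mutation_cyclic_ess (skew_S _ _ _) equivN mc.
Qed.

Theorem mainTheorem8 (A : 'M[int]_3) :
  skew_symmetric A -> (alg_passes A <-> mutation_cyclic A).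
Proof.
move=> skA; split; first exact: mutation_cyclic_of_alg_passes.
by rewrite (skew3E skA); exact: alg_passes_of_mutation_cyclic.
Qed.
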